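(* Let $\mathcal{I}$ be an inclusion-wise minimal unsatisfiable instance of $\mathrm{CSP}(\mathcal{A})$, i.e., $\mathcal{I}$ is unsatisfiable but removing any single constraint yields a satisfiable instance. Then the primal graph of $\mathcal{I}$ is a cycle.
   Context: Allen's interval algebra has domain $\mathbb{I}=\{[a,b] : a,b\in\mathbb{Q},\ a<b\}$; for $I=[a,b]$ write $I^-=a$, $I^+=b$. Basic relations: $x\,\mathsf{p}\,y$ iff $x^+<y^-$; $x\,\mathsf{m}\,y$ iff $x^+=y^-$; $x\,\mathsf{o}\,y$ iff $x^-<y^-<x^+<y^+$; $x\,\mathsf{d}\,y$ iff $y^-<x^-$ and $x^+<y^+$; $x\,\mathsf{s}\,y$ iff $x^-=y^-$ and $x^+<y^+$; $x\,\mathsf{f}\,y$ iff $x^+=y^+$ and $y^-<x^-$; $x\equiv y$ iff $x=y$; inverses $\mathsf{ri}$ with $x\,\mathsf{ri}\,y$ iff $y\,\mathsf{r}\,x$; $\mathcal{A}$ is the set of these 13 relations. An instance of $\mathrm{CSP}(\mathcal{A})$ consists of variables and binary constraints $x\,R\,y$ with $R\in\mathcal{A}$; it is satisfiable if an assignment of intervals satisfies all constraints. The primal graph of an instance is the undirected multigraph whose vertices are the variables and which has one edge $\{x,y\}$ for each constraint $x\,R\,y$; loops and parallel edges are allowed, and a single loop or a pair of parallel edges counts as a cycle. *)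

From HB Require Import structures.
From Stdlib Require List.
From mathcomp Require Import all_boot all_order all_algebra.
Set Implicit Arguments. Unset Strict Implicit. Unset Printing Implicit Defensive.
Import Order.TTheory GRing.Theory Num.Theory.
Local Open Scope ring_scope.

Definition interval := (rat * rat)%type.
Definition is_interval (I : interval) : bool := I.1 < I.2.

(* The 13 basic relations of Allen's interval algebra. *)
Inductive basic_rel : Type :=
| Rp | Rm | Ro | Rd | Rs | Rf | Req | Rpi | Rmi | Roi | Rdi | Rsi | Rfi.

Definition holds0 (r : basic_rel) (x y : interval) : bool :=
  match r with
  | Rp => x.2 < y.1
  | Rm => x.2 == y.1
  | Ro => [&& x.1 < y.1, y.1 < x.2 & x.2 < y.2]
  | Rd => (y.1 < x.1) && (x.2 < y.2)
  | Rs => (x.1 == y.1) && (x.2 < y.2)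
  | Rf => (x.2 == y.2) && (y.1 < x.1)
  | Req => x == y
  | Rpi => y.2 < x.1
  | Rmi => y.2 == x.1
  | Roi => [&& y.1 < x.1, x.1 < y.2 & y.2 < x.2]
  | Rdi => (x.1 < y.1) && (y.2 < x.2)
  | Rsi => (y.1 == x.1) && (y.2 < x.2)
  | Rfi => (y.2 == x.2) && (x.1 < y.1)
  end.

(* Variables are natural numbers; a constraint x R y is a triple (x, R, y).
   An instance is a finite list (multiset) of constraints; its variables are
   those occurring in its constraints. *)
Definition constraint := (nat * basic_rel * nat)%type.
Definition instance := seq constraint.

Definition satisfiable (I : instance) : Prop :=
  exists a : nat -> interval,
    (forall v, is_interval (a v)) /\
    (forall c, Stdlib.Lists.List.In c I -> holds0 c.1.2 (a c.1.1) (a c.2)).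

Definition remove_nth (I : instance) (i : nat) : instance :=
  take i I ++ drop i.+1 I.

Definition minimal_unsat (I : instance) : Prop :=
  ~ satisfiable I /\ (forall i, (i < size I)%N -> satisfiable (remove_nth I i)).

(* Primal multigraph: one undirected edge per constraint, stored normalized. *)
Definition uedge (x y : nat) : nat * nat := (minn x y, maxn x y).
Definition primal_edges (I : instance) : seq (nat * nat) :=
  [seq uedge c.1.1 c.2 | c <- I].

(* A multigraph (vertex set = endpoints of its edges) is a cycle iff there is
   a nonempty duplicate-free sequence of vertices v_0 ... v_{k-1} such that the
   edge multiset is exactly {v_i, v_{i+1 mod k}}.  k = 1 gives a single loop,
   k = 2 a pair of parallel edges. *)
Definition is_cycle (E : seq (nat * nat)) : Prop :=
  exists vs : seq nat, [/\ (0 < size vs)%N, uniq vs &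
    perm_eq E [seq uedge p.1 p.2 | p <- zip vs (rot 1 vs)]].

(* Each basic relation holds between two intervals iff their four endpoints are
   ordered as in a fixed integer model, so a constraint forces weak and strict
   inequalities between the endpoints it relates.  A loop-free instance is
   therefore unsatisfiable iff some closed walk through endpoints has all its
   arcs forced weak and one forced strict: otherwise ranking every endpoint by
   the number of endpoints strictly below it is a solution.  If such a walk
   visits a variable twice, or uses a constraint twice, it can be cut into two
   shorter closed walks one of which is again contradictory; a shortest one is
   thus a simple cycle of the primal graph without repeated constraints, and in
   a minimal unsatisfiable instance it must use every constraint.  A loop is
   satisfiable iff its relation is [Req], so a minimal unsatisfiable instance
   containing a loop consists of that loop alone. *)

From HB Require Import structures.
From Pilot Require Import Defs.
From mathcomp Require Import all_boot all_order all_algebra.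
From mathcomp Require Import lra zify boolp.
Import Order.TTheory GRing.Theory Num.Theory.
Set Implicit Arguments. Unset Strict Implicit.

Lemma basic_rel_eq_dec : comparable basic_rel.
Proof. rewrite /comparable /decidable; decide equality. Qed.
HB.instance Definition _ := comparableMixin basic_rel_eq_dec.

Lemma In_mem (T : eqType) (x : T) s : List.In x s <-> x \in s.
Proof.
elim: s => [|y s IH] //=; rewrite inE; split.
  by case=> [->|/IH ->]; rewrite ?eqxx ?orbT.
by case/predU1P => [->|/IH]; [left|right].
Qed.

Section SeqFacts.
Variable T : eqType.
Implicit Types s : seq T.

Lemma not_uniq_map_split (U : eqType) (f : T -> U) s : ~~ uniq (map f s) ->
  exists s1 x s2 y s3, s = s1 ++ x :: s2 ++ y :: s3 /\ f x = f y.
Proof.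
elim: s => //= x s IH; rewrite negb_and negbK => /orP[/mapP[y ys fxy] | /IH].
  by case/splitPr: ys => s2 s3; exists [::], x, s2, y, s3.
by case=> s1 [z [s2 [y [s3 [-> fzy]]]]]; exists (x :: s1), z, s2, y, s3.
Qed.

Lemma rcons_cons_last s z : exists x s', rcons s z = x :: s' /\ last x s' = z.
Proof. by case: s => [|x s]; [exists z, [::] | exists x, (rcons s z); rewrite last_rcons]. Qed.

Lemma uniq_cycle_neq s : uniq s -> 1 < size s -> cycle (fun x y => x != y) s.
Proof.
case: s => [|x [|y s]] // xys _; rewrite (cycle_path x) /=; apply/andP; split.
  by case/andP: xys => xys _; apply: contraNneq xys => <-; apply: mem_last.
by apply: (pairwise_sorted (s := [:: x, y & s])); rewrite -uniq_pairwise.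
Qed.

Lemma cycle_zip_rot (e : rel T) s : cycle e s = all (fun p => e p.1 p.2) (zip s (rot 1 s)).
Proof.
case: s => // x s; rewrite rot1_cons /=.
elim: s {1 3}x => [|y s IH] z /=; first by rewrite andbT.
by rewrite IH.
Qed.

Lemma map_pairs_cycle (U : Type) (e : rel T) (f : T -> T -> U) (g : T -> U) s :
  cycle e s -> (forall x y, e x y -> f x y = g y) ->
  [seq f p.1 p.2 | p <- zip s (rot 1 s)] = map g (rot 1 s).
Proof.
rewrite cycle_zip_rot => /allP es efg.
rewrite -{2}(@unzip2_zip _ _ s (rot 1 s)) ?size_rot // -map_comp.
by apply/eq_in_map => p /es; apply: efg.
Qed.

Lemma map_zip (U : Type) (f : T -> U) s t :
  [seq (f p.1, f p.2) | p <- zip s t] = zip (map f s) (map f t).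
Proof. by elim: s t => [|x s IH] [|y t] //=; rewrite IH. Qed.

Lemma sub_count_lt (a1 a2 : pred T) s x :
  subpred a1 a2 -> x \in s -> a2 x -> ~~ a1 x -> count a1 s < count a2 s.
Proof.
move=> a12 + a2x a1x; elim: s => //= y s IH /predU1P[<-|/IH lt].
  by rewrite a2x (negbTE a1x) ltnS sub_count.
by rewrite -addnS; apply: leq_add lt; case a1y: (a1 y); rewrite // a12.
Qed.

End SeqFacts.

Section StrictCycle.
Variables (T : eqType) (weak strict : rel T).

Definition strict_cycle (s : seq T) : bool :=
  cycle weak s && ~~ cycle (fun x y => ~~ strict x y) s.

Lemma rot_strict_cycle n s : strict_cycle (rot n s) = strict_cycle s.
Proof. by rewrite /strict_cycle !rot_cycle. Qed.

(* Cutting [x :: s ++ y :: t] into [x :: s] and [y :: t], where [s] ends in [p]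
   and [t] in [q], replaces the arcs [(q, x)] and [(p, y)] by [(p, x)] and
   [(q, y)]. *)
Definition exchangeable (p q x y : T) : bool :=
  [|| weak p x && strict p x, weak q y && strict q y
    | [&& weak p x, weak q y, ~~ strict q x & ~~ strict p y]].

Lemma strict_cycle_cut x s y t :
  strict_cycle (x :: s ++ y :: t) ->
  (weak (last y t) x -> weak (last x s) y -> exchangeable (last x s) (last y t) x y) ->
  strict_cycle (x :: s) || strict_cycle (y :: t).
Proof.
rewrite /strict_cycle !(cycle_path x) /= !last_cat /= !cat_path /=.
set p := last x s; set q := last y t.
case/andP=> /and4P[wqx ws wpy wt]; rewrite wqx wpy ws wt /= !negb_and !negbK.
move=> nstrict /(_ isT isT) /or3P[/andP[-> ->] | /andP[-> ->] | /and4P[-> -> sqx spy]];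
  rewrite ?orbT //.
move: nstrict; rewrite (negbTE sqx) (negbTE spy) /=.
by case/orP=> ->; rewrite ?orbT.
Qed.

Lemma strict_cycle_rot_cut n w x s y t :
  strict_cycle w -> rot n w = x :: s ++ y :: t ->
  (weak (last y t) x -> weak (last x s) y -> exchangeable (last x s) (last y t) x y) ->
  exists2 w', strict_cycle w' & size w' < size w /\ {subset w' <= w}.
Proof.
move=> sw wE exch; have := @strict_cycle_cut x s y t; rewrite -wE rot_strict_cycle.
have memw z : z \in x :: s ++ y :: t -> z \in w by rewrite -wE mem_rot.
have sizew : size w = (size s + size t).+2 by rewrite -(size_rot n) wE /= size_cat addnS.
case/(_ sw exch)/orP => sc; [exists (x :: s) | exists (y :: t)] => //; split.
- by rewrite sizew /=; lia.
- move=> z; rewrite inE => /predU1P[-> | zs]; apply: memw.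
    by rewrite mem_head.
  by rewrite inE mem_cat zs orbT.
- by rewrite sizew /=; lia.
- by move=> z zt; apply: memw; rewrite inE mem_cat zt !orbT.
Qed.

End StrictCycle.

Definition pick (A : Type) (u w : A * A) (i : bool * bool) : A :=
  let I := if i.1 then w else u in if i.2 then I.2 else I.1.

(* Two integer intervals in relation [R]: by the definition of the relations, [R]
   holds between two intervals iff their endpoints are ordered as in [model R]. *)
Definition model (R : basic_rel) : (nat * nat) * (nat * nat) :=
  match R with
  | Rp => ((0, 1), (2, 3)) | Rm => ((0, 1), (1, 2)) | Ro => ((0, 2), (1, 3))
  | Rd => ((1, 2), (0, 3)) | Rs => ((0, 1), (0, 2)) | Rf => ((1, 2), (0, 2))
  | Req => ((0, 1), (0, 1)) | Rpi => ((2, 3), (0, 1)) | Rmi => ((1, 2), (0, 1))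
  | Roi => ((1, 3), (0, 2)) | Rdi => ((0, 3), (1, 2)) | Rsi => ((0, 2), (0, 1))
  | Rfi => ((0, 2), (1, 2))
  end.

Definition canon_pos (R : basic_rel) : bool * bool -> nat := pick (model R).1 (model R).2.

Lemma canon_pos_lt R s : canon_pos R (s, false) < canon_pos R (s, true).
Proof. by case: R; case: s. Qed.

Definition corners : seq (bool * bool) :=
  [:: (false, false); (false, true); (true, false); (true, true)].

Lemma mem_corners i : i \in corners.
Proof. by case: i => [[] []]. Qed.

Section IntervalOrder.
Local Open Scope ring_scope.

Definition respects (R : basic_rel) (u w : Defs.interval) : bool :=
  all (fun i => all (fun j =>
      ((canon_pos R i <= canon_pos R j)%N ==> (pick u w i <= pick u w j)) &&
      ((canon_pos R i < canon_pos R j)%N ==> (pick u w i < pick u w j))) corners) corners.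

Lemma respectsP R u w :
  reflect (forall i j, ((canon_pos R i <= canon_pos R j)%N -> pick u w i <= pick u w j) /\
                       ((canon_pos R i < canon_pos R j)%N -> pick u w i < pick u w j))
          (respects R u w).
Proof.
apply: (iffP allP) => [H i j | H i _].
  by have /allP/(_ j (mem_corners j))/andP[/implyP le /implyP lt] := H i (mem_corners i).
by apply/allP => j _; have [le lt] := H i j; rewrite (introT implyP le) (introT implyP lt).
Qed.

Lemma holds_respects R u w :
  is_interval u -> is_interval w -> holds0 R u w = respects R u w.
Proof.
case: u w => [u1 u2] [w1 w2]; rewrite /is_interval /= => hu hw.
case: R; rewrite /respects /canon_pos /pick /= ?xpair_eqE ?eq_le /=; apply/idP/idP => H;
  repeat case/andP: H => ? H; repeat (apply/andP; split); rewrite ?lexx //; lra.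
Qed.

Lemma holds_loop R u : is_interval u -> holds0 R u u -> R = Req.
Proof.
case: u => u1 u2; rewrite /is_interval /= => hu.
case: R => //=; rewrite ?eq_le => H; exfalso; repeat case/andP: H => ? H; lra.
Qed.

End IntervalOrder.

(* [(v, false)] and [(v, true)] are the left and right endpoints of variable [v]. *)
Definition point := (nat * bool)%type.

Definition incident (c : constraint) (p : point) : bool := (p.1 == c.1.1) || (p.1 == c.2).

Definition canon_at (c : constraint) (p : point) : nat := canon_pos c.1.2 (p.1 != c.1.1, p.2).

Definition le_via (c : constraint) (p q : point) : bool :=
  [&& incident c p, incident c q & canon_at c p <= canon_at c q].

Definition lt_via (c : constraint) (p q : point) : bool :=
  [&& incident c p, incident c q & canon_at c p < canon_at c q].

Lemma lt_via_le c p q : lt_via c p q -> le_via c p q.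
Proof. by rewrite /lt_via /le_via => /and3P[-> -> /ltnW]. Qed.

Lemma lt_via_left c v r : le_via c (v, true) r -> lt_via c (v, false) r.
Proof.
case/and3P => iv ir le; apply/and3P; split=> //; exact: leq_trans (canon_pos_lt _ _) le.
Qed.

(* A step [(c, p)] of a walk enters the endpoint [p] through the constraint [c],
   so the arc [(s, t)] goes from [s.2] to [t.2] and is forced by [t.1]. *)
Definition step := (constraint * point)%type.

Definition weak_arc (s t : step) : bool := le_via t.1 s.2 t.2.
Definition strict_arc (s t : step) : bool := lt_via t.1 s.2 t.2.

Notation endpoint_cycle := (strict_cycle weak_arc strict_arc).

Section Soundness.
Local Open Scope ring_scope.
Variable a : nat -> Defs.interval.
Hypothesis a_valid : forall v, is_interval (a v).

Definition endpoint (p : point) : rat := if p.2 then (a p.1).2 else (a p.1).1.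

Lemma endpoint_pick c p : incident c p -> endpoint p = pick (a c.1.1) (a c.2) (p.1 != c.1.1, p.2).
Proof. by case: p => v b; rewrite /incident /=; case: eqVneq => [-> | _ /eqP ->]. Qed.

Lemma via_endpoint c p q : holds0 c.1.2 (a c.1.1) (a c.2) ->
  (le_via c p q -> endpoint p <= endpoint q) /\ (lt_via c p q -> endpoint p < endpoint q).
Proof.
rewrite holds_respects // => /respectsP mono.
split=> /and3P[ip iq pq]; rewrite (endpoint_pick ip) (endpoint_pick iq).
  exact: (mono _ _).1.
exact: (mono _ _).2.
Qed.

Lemma no_endpoint_cycle w :
  {in map fst w, forall c, holds0 c.1.2 (a c.1.1) (a c.2)} -> ~~ endpoint_cycle w.
Proof.
move=> sat_w; apply/negP => /andP[ww]; apply/negP; rewrite negbK.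
have mono s t : t \in w -> (weak_arc s t -> endpoint s.2 <= endpoint t.2) /\
                         (strict_arc s t -> endpoint s.2 < endpoint t.2).
  by move=> tw; apply: via_endpoint; apply: sat_w; apply: map_f.
have /allrelP le_w : all2rel (fun s t => endpoint s.2 <= endpoint t.2) w.
  rewrite -cycle_all2rel; last by move=> ? ? ?; apply: le_trans.
  by apply: (sub_in_cycle _ (allss w) ww) => s t _ tw /(mono _ _ tw).1.
apply: (sub_in_cycle _ (allss w) ww) => s t sw tw _.
by apply/negP => /(mono _ _ tw).2; rewrite ltNge le_w.
Qed.

End Soundness.

Lemma satisfiable_no_endpoint_cycle J w :
  satisfiable J -> {subset map fst w <= J} -> ~~ endpoint_cycle w.
Proof. by case=> a [valid sat] wJ; apply: (no_endpoint_cycle valid) => c /wJ /In_mem /sat. Qed.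

Definition is_loop (c : constraint) : bool := c.1.1 == c.2.

Definition endpoints (J : instance) : seq point :=
  flatten [seq [:: (c.1.1, false); (c.1.1, true); (c.2, false); (c.2, true)] | c <- J].

Lemma incident_endpoints J c p : c \in J -> incident c p -> p \in endpoints J.
Proof.
move=> cJ; case: p => v b; rewrite /incident /= => vc; apply/flattenP.
exists [:: (c.1.1, false); (c.1.1, true); (c.2, false); (c.2, true)]; first exact: map_f.
by case/orP: vc => /eqP ->; case: b; rewrite !inE eqxx ?orbT.
Qed.

Section Completeness.
Variable J : instance.

(* a walk from [r] to [q] with a strict arc; only the endpoint [x.2] of its
   starting step matters *)
Definition below (r q : point) : Prop := exists x w,
  [/\ x.2 = r, {subset map fst w <= J}, path weak_arc x w,
      ~~ path (fun s t => ~~ strict_arc s t) x w & (last x w).2 = q].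

Lemma below_le c r p q : c \in J -> le_via c p q -> below r p -> below r q.
Proof.
move=> cJ pq [x [w [xr wJ ww sw wp]]]; exists x, (rcons w (c, q)); split => //.
- by move=> d; rewrite map_rcons mem_rcons inE => /predU1P[-> | /wJ].
- by rewrite rcons_path ww /weak_arc wp.
- by rewrite rcons_path negb_and sw.
- by rewrite last_rcons.
Qed.

Lemma below_lt c p q : c \in J -> lt_via c p q -> below p q.
Proof.
move=> cJ pq; exists (c, p), [:: (c, q)]; split => //=.
- by move=> d; rewrite inE => /eqP ->.
- by rewrite /weak_arc lt_via_le.
- by rewrite /strict_arc pq.
Qed.

Lemma below_cycle q : below q q -> exists2 w, endpoint_cycle w & {subset map fst w <= J}.
Proof.
case=> x [[|t w] [xq wJ ww sw /= wq]]; first by rewrite /= in sw.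
exists (t :: w) => //; rewrite /strict_cycle !(cycle_path x) /=.
have [-> ->] : weak_arc (last t w) t = weak_arc x t /\ strict_arc (last t w) t = strict_arc x t.
  by rewrite /weak_arc /strict_arc wq xq.
by move: ww sw => /= -> ->.
Qed.

Hypothesis acyclic : forall w, {subset map fst w <= J} -> ~~ endpoint_cycle w.

Lemma below_irrefl q : ~ below q q.
Proof. by case/below_cycle => w sw /acyclic; rewrite sw. Qed.

Definition rank (p : point) : nat := count (fun r => `[< below r p >]) (endpoints J).

Lemma rank_le c p q : c \in J -> le_via c p q -> rank p <= rank q.
Proof.
by move=> cJ pq; apply: sub_count => r /asboolP rp; apply/asboolP; exact: below_le cJ pq rp.
Qed.

Lemma rank_lt c p q : c \in J -> lt_via c p q -> rank p < rank q.
Proof.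
move=> cJ pq; apply: (@sub_count_lt _ _ _ _ p).
- by move=> r /asboolP rp; apply/asboolP; exact: below_le cJ (lt_via_le pq) rp.
- by case/and3P: pq => ip _ _; apply: incident_endpoints ip.
- by apply/asboolP; exact: below_lt cJ pq.
- by apply/asboolP; apply: below_irrefl.
Qed.

Hypothesis loopfree : ~~ has is_loop J.

Local Open Scope ring_scope.

Definition ranked (v : nat) : Defs.interval :=
  if has (incident^~ (v, false)) J then ((rank (v, false))%:R, (rank (v, true))%:R) else (0, 1).

Lemma ranked_valid v : is_interval (ranked v).
Proof.
rewrite /ranked /is_interval; case: hasP => [[c cJ vc] | _]; last exact: ltr01.
rewrite ltr_nat; apply: (rank_lt cJ); apply: lt_via_left.
by apply/and3P; split.
Qed.

Lemma ranked_holds c : c \in J -> holds0 c.1.2 (ranked c.1.1) (ranked c.2).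
Proof.
case: c => [[x R] y] cJ /=.
have xy : x != y by have /hasPn/(_ _ cJ) := loopfree.
pose P (i : bool * bool) : point := (if i.1 then y else x, i.2).
have incP i : incident (x, R, y) (P i) by case: i => [[] b]; rewrite /incident /= eqxx ?orbT.
have canonP i : canon_at (x, R, y) (P i) = canon_pos R i.
  by case: i => [[] b]; rewrite /canon_at /= ?eqxx // eq_sym xy.
have hasP' v : v \in [:: x; y] -> has (incident^~ (v, false)) J.
  by rewrite !inE => vxy; apply/hasP; exists (x, R, y).
have rankedP i : pick (ranked x) (ranked y) i = (rank (P i))%:R.
  by case: i => [[] []]; rewrite /pick /ranked /= hasP' ?inE ?eqxx ?orbT.
rewrite holds_respects ?ranked_valid //; apply/respectsP => i j.
rewrite !rankedP ler_nat ltr_nat -!canonP; split => ij.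
  by apply: (rank_le cJ); rewrite /le_via !incP.
by apply: (rank_lt cJ); rewrite /lt_via !incP.
Qed.

Lemma acyclic_satisfiable : satisfiable J.
Proof. by exists ranked; split=> [|c /In_mem]; [apply: ranked_valid | apply: ranked_holds]. Qed.

End Completeness.

Definition step_var (s : step) : nat := s.2.1.

Lemma exchangeable_same_var p q x y : step_var p = step_var q ->
  weak_arc q x -> weak_arc p y -> exchangeable weak_arc strict_arc p q x y.
Proof.
case: p q => c [v b] [d [v' b']]; rewrite /step_var /= => <- {v'}.
rewrite /exchangeable /weak_arc /strict_arc /=.
case: b b' => [] [] qx py; rewrite ?qx ?py /=.
- by case: lt_via; case: lt_via.
- by have lt := lt_via_left py; rewrite lt (lt_via_le lt) orbT.
- by have lt := lt_via_left qx; rewrite lt (lt_via_le lt).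
- by case: lt_via; case: lt_via.
Qed.

Lemma exchangeable_same_constraint p q x y : x.1 = y.1 ->
  weak_arc q x -> weak_arc p y -> exchangeable weak_arc strict_arc p q x y.
Proof.
case: x y => c r [_ r'] /= <-; rewrite /exchangeable /weak_arc /strict_arc /le_via /lt_via /=.
case/and3P => -> -> qr /and3P[-> -> pr] /=; lia.
Qed.

Lemma endpoint_cycle_shorten w : endpoint_cycle w ->
  ~~ (uniq (map step_var w) && uniq (map fst w)) ->
  exists2 w', endpoint_cycle w' & size w' < size w /\ {subset w' <= w}.
Proof.
move=> sw; rewrite negb_and => /orP[] /not_uniq_map_split[w1 [p [w2 [q [w3 [wE pq]]]]]].
  have [x [s [xsE xsq]]] := rcons_cons_last w2 q.
  have [y [t [ytE ytp]]] := rcons_cons_last (w3 ++ w1) p.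
  apply: (strict_cycle_rot_cut (n := size (rcons w1 p)) sw).
    by rewrite wE -cat_rcons rot_size_cat -cat_rcons xsE -catA -rcons_cat ytE.
  by rewrite xsq ytp; apply: exchangeable_same_var.
apply: (strict_cycle_rot_cut (n := size w1) (x := p) (s := w2) (y := q) (t := w3 ++ w1) sw).
  by rewrite wE rot_size_cat /= -catA.
exact: exchangeable_same_constraint.
Qed.

Lemma simple_endpoint_cycle w : endpoint_cycle w -> exists2 w', endpoint_cycle w' &
  [/\ {subset w' <= w}, uniq (map step_var w') & uniq (map fst w')].
Proof.
have [n] := ubnP (size w); elim: n w => // n IH w /ltnSE le_wn sw.
have [/andP[uv uc] | nu] := boolP (uniq (map step_var w) && uniq (map fst w)).
  by exists w => //; split => // z.
have [w' sw' [lt_w'w sub_w'w]] := endpoint_cycle_shorten sw nu.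
have [w'' sw'' [sub_w''w' uv uc]] := IH w' (leq_trans lt_w'w le_wn) sw'.
by exists w'' => //; split => // z /sub_w''w' /sub_w'w.
Qed.

Definition cedge (c : constraint) : nat * nat := uedge c.1.1 c.2.

Lemma uedge_incident c p q : incident c p -> incident c q -> p.1 != q.1 ->
  uedge p.1 q.1 = cedge c.
Proof.
rewrite /incident /cedge /uedge => /orP[]/eqP-> /orP[]/eqP-> //; rewrite ?eqxx //.
by rewrite minnC maxnC.
Qed.

Lemma endpoint_cycle_size w : endpoint_cycle w -> 1 < size w.
Proof. by case: w => [|s [|t w]] //; rewrite /strict_cycle /= /strict_arc /lt_via ltnn !andbF. Qed.

Lemma is_cycle_perm E F : perm_eq E F -> is_cycle F -> is_cycle E.
Proof. by move=> EF [vs [vs0 uvs Fvs]]; exists vs; split; rewrite // (perm_trans EF Fvs). Qed.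

Lemma simple_endpoint_cycle_is_cycle w : endpoint_cycle w -> uniq (map step_var w) ->
  is_cycle (map cedge (map fst w)).
Proof.
move=> sw uv; have w_gt1 := endpoint_cycle_size sw.
have ww : cycle [rel s t | weak_arc s t && (step_var s != step_var t)] w.
  rewrite cycle_relI; case/andP: sw => -> _.
  by have := uniq_cycle_neq uv; rewrite size_map cycle_map; apply.
exists (map step_var w); split; rewrite ?size_map 1?ltnW //.
have -> : [seq uedge p.1 p.2 | p <- zip (map step_var w) (rot 1 (map step_var w))] =
          map (cedge \o fst) (rot 1 w).
  rewrite -map_rot -map_zip -map_comp.
  apply: (map_pairs_cycle (f := fun s t => uedge (step_var s) (step_var t)) ww) => s t.
  by case/andP=> /and3P[ps pt _]; apply: uedge_incident.
by rewrite map_rot perm_sym perm_rot map_comp perm_refl.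
Qed.

Lemma satisfiable_sub I J : {subset I <= J} -> satisfiable J -> satisfiable I.
Proof. by move=> IJ [a [valid sat]]; exists a; split=> // c /In_mem /IJ /In_mem /sat. Qed.

Lemma remove_nth_cat (I1 I2 : instance) c : remove_nth (I1 ++ c :: I2) (size I1) = I1 ++ I2.
Proof. by rewrite /remove_nth take_size_cat // -cat_rcons drop_size_cat ?size_rcons. Qed.

Lemma minimal_unsat_remove I I1 c I2 :
  minimal_unsat I -> I = I1 ++ c :: I2 -> satisfiable (I1 ++ I2).
Proof.
case=> _ min IE; rewrite -(remove_nth_cat _ _ c) -IE; apply: min.
by rewrite IE size_cat /= addnS ltnS leq_addr.
Qed.

Lemma minimal_unsat_uniq I : minimal_unsat I -> uniq I.
Proof.
move=> Imin; apply: contraT; rewrite -(map_id I).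
case/not_uniq_map_split => I1 [c [I2 [d [I3 [IE /= cd]]]]].
case: Imin.1; apply: satisfiable_sub (minimal_unsat_remove Imin IE) => e.
by rewrite IE !(mem_cat, inE) cd => /orP[-> | /orP[-> | ->]]; rewrite /= ?orbT.
Qed.

Lemma minimal_unsat_covered I w : minimal_unsat I -> endpoint_cycle w ->
  {subset map fst w <= I} -> {subset I <= map fst w}.
Proof.
move=> Imin sw wI c cI; apply: contraT => cw.
case/splitPr: cI Imin wI => I1 I2 Imin wI.
suff: ~~ endpoint_cycle w by rewrite sw.
apply: (satisfiable_no_endpoint_cycle (minimal_unsat_remove Imin erefl)) => d dw.
move: (wI d dw); rewrite !mem_cat inE; case: eqP => [dc | _ //].
by rewrite -dc dw in cw.
Qed.

Lemma unsat_loop J x R : R != Req -> (x, R, x) \in J -> ~ satisfiable J.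
Proof.
move=> /eqP nR xJ [a [valid sat]]; apply: nR.
exact: holds_loop (valid x) (sat _ (iffRL (In_mem _ _) xJ)).
Qed.

Lemma satisfiable_insert_Req_loop J1 J2 x :
  satisfiable (J1 ++ J2) -> satisfiable (J1 ++ (x, Req, x) :: J2).
Proof.
case=> a [valid sat]; exists a; split=> // c /In_mem; rewrite !(mem_cat, inE).
case: eqP => [-> _ | _ cJ]; first by rewrite /= eqxx.
by apply: sat; apply/In_mem; rewrite mem_cat.
Qed.

Lemma minimal_unsat_loop I c : minimal_unsat I -> c \in I -> is_loop c -> I = [:: c].
Proof.
case: c => [[x R] y] Imin cI /eqP /= xy; subst y.
case/splitPr: cI Imin => I1 I2 Imin.
have [RE | nR] := eqVneq R Req.
  case: Imin.1; rewrite RE; apply: satisfiable_insert_Req_loop.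
  exact: minimal_unsat_remove Imin erefl.
case: I1 Imin => [|d I1] Imin.
  case: I2 Imin => [|d I2] // Imin; case: (unsat_loop nR (mem_head (x, R, x) I2)).
  exact: (minimal_unsat_remove (I1 := [:: (x, R, x)]) Imin erefl).
case: (unsat_loop (J := I1 ++ (x, R, x) :: I2) (x := x) nR); first by rewrite mem_cat mem_head orbT.
exact: (minimal_unsat_remove (I1 := [::]) Imin erefl).
Qed.

Lemma unsat_endpoint_cycle J : ~~ has is_loop J -> ~ satisfiable J ->
  exists2 w, endpoint_cycle w & {subset map fst w <= J}.
Proof.
move=> loopfree unsat; apply: contrapT => no_cycle; apply/unsat/(acyclic_satisfiable _ loopfree).
by move=> w wJ; apply/negP => sw; apply: no_cycle; exists w.
Qed.

Theorem mainTheorem4 (I : instance) :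
  minimal_unsat I -> is_cycle (primal_edges I).
Proof.
move=> Imin; case: (boolP (has is_loop I)) => [/hasP[c cI loop_c] | loopfree].
  rewrite (minimal_unsat_loop Imin cI loop_c); exists [:: c.1.1]; split => //=.
  by rewrite (eqP loop_c).
have [w0 sw0 w0I] := unsat_endpoint_cycle loopfree Imin.1.
have [w sw [ww0 uv uc]] := simple_endpoint_cycle sw0.
have wI : {subset map fst w <= I} by move=> c /mapP[s /ww0 s_w0 ->]; apply/w0I/map_f.
have Iw := minimal_unsat_covered Imin sw wI.
apply: is_cycle_perm (simple_endpoint_cycle_is_cycle sw uv); apply: perm_map.
by apply: uniq_perm (minimal_unsat_uniq Imin) uc _ => c; apply/idP/idP => [/Iw | /wI].
Qed.
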